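(* Let $G$ and $H$ be connected graphs, each with at least $3$ vertices, let $\ell_1=\lambda_3(G)$, $\ell_2=\lambda_3(H)$, $n_2=|V(H)|$. Let $S=\{x,y,z\}$ be a set of three distinct vertices of $G\circ H$ all lying in the same $H$-layer $H(u)$ for some $u\in V(G)$. Then $G\circ H$ contains at least $\ell_2+\ell_1 n_2$ pairwise edge-disjoint $S$-trees.
   Context: For a graph $G$ and $S\subseteq V(G)$ with $|S|\ge 2$, an $S$-tree is a subgraph that is a tree containing all vertices of $S$; $\lambda(S)$ is the maximum number of pairwise edge-disjoint $S$-trees, and $\lambda_3(G)=\min\{\lambda(S): |S|=3\}$. The lexicographic product $G\circ H$ has vertex set $V(G)\times V(H)$, and $(u,v)$ is adjacent to $(u',v')$ iff either $uu'\in E(G)$, or $u=u'$ and $vv'\in E(H)$. For $u\in V(G)$, the $H$-layer $H(u)$ is the vertex set $\{(u,v): v\in V(H)\}$. *)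

From mathcomp Require Import all_boot.
Set Implicit Arguments. Unset Strict Implicit. Unset Printing Implicit Defensive.

Section Graphs.
Variable T : finType.
Variable e : rel T.

Definition simple_graph : Prop := symmetric e /\ irreflexive e.

Definition connected_graph : Prop := forall x y : T, connect e x y.

Definition is_edge (A : {set T}) : Prop := exists a b, e a b /\ A = [set a; b].

Definition sub_adj (F : {set {set T}}) : rel T := fun a b => [set a; b] \in F.

Definition subgraph (W : {set T}) (F : {set {set T}}) : Prop :=
  (forall A, A \in F -> is_edge A) /\ (forall A, A \in F -> A \subset W).

Definition is_tree (W : {set T}) (F : {set {set T}}) : Prop :=
  subgraph W F /\
  (forall a b, a \in W -> b \in W -> connect (sub_adj F) a b) /\
  ~ (exists s : seq T, [/\ uniq s, 3 <= size s & cycle (sub_adj F) s]).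

Definition S_tree (S : {set T}) (W : {set T}) (F : {set {set T}}) : Prop :=
  S \subset W /\ is_tree W F.

Definition has_disjoint_S_trees (S : {set T}) (k : nat) : Prop :=
  exists Tr : 'I_k -> {set T} * {set {set T}},
    (forall i, S_tree S (Tr i).1 (Tr i).2) /\
    (forall i j, i != j -> [disjoint (Tr i).2 & (Tr j).2]).

Definition is_lambda (S : {set T}) (l : nat) : Prop :=
  has_disjoint_S_trees S l /\ (forall k, has_disjoint_S_trees S k -> k <= l).

Definition is_lambda3 (l : nat) : Prop :=
  (exists S : {set T}, #|S| = 3 /\ is_lambda S l) /\
  (forall (S : {set T}) k, #|S| = 3 -> is_lambda S k -> l <= k).

End Graphs.

Definition lexprod (V1 V2 : finType) (eG : rel V1) (eH : rel V2) : rel (V1 * V2) :=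
  fun p q => eG p.1 q.1 || ((p.1 == q.1) && eH p.2 q.2).

From mathcomp Require Import all_boot.
From Stdlib Require Import Classical.
Set Implicit Arguments. Unset Strict Implicit. Unset Printing Implicit Defensive.

(* The trees are built in
   two families, following the paper.
   - Layer trees: lambda_3(H) >= l2 gives l2 edge-disjoint {x.2, y.2, z.2}-trees
     in H; copied into the layer H(u) by v |-> (u, v) they become S-trees of
     G o H using only edges inside H(u).
   - Stars: every vertex of a graph with lambda_3 = l has at least l distinct
     neighbours (each of l edge-disjoint trees through that vertex uses its own
     edge there).  So u has distinct neighbours w_1, ..., w_l1 in G, and each
     of the l1 * |V(H)| vertices (w_j, v) is adjacent to all of H(u); the star
     joining (w_j, v) to x, y, z is an S-tree.
   Star edges all contain their centre, which lies outside H(u), so the stars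
   are pairwise edge-disjoint and disjoint from the layer trees. *)

Lemma disjoint_no_common (T : finType) (A B : {pred T}) :
  (forall t, t \in A -> t \in B -> False) -> [disjoint A & B].
Proof.
by move=> common; rewrite disjoint_subset; apply/subsetP => t tA; apply/negP/common.
Qed.

Lemma bounded_max (P : nat -> Prop) d :
  P 0 -> (forall k, P k -> k <= d) -> exists m, P m /\ forall k, P k -> k <= m.
Proof.
move=> P0; elim: d => [|d IHd] bound; first by exists 0.
have [Pd1|nPd1] := classic (P d.+1); first by exists d.+1.
apply: IHd => k Pk; move: (bound k Pk); rewrite leq_eqVlt => /orP[/eqP Ek|//].
by rewrite Ek in Pk.
Qed.

Lemma card3 (T : finType) (a b c : T) :
  a != b -> b != c -> a != c -> #|[set a; b; c]| = 3.
Proof.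
move=> ab bc ac; rewrite setUC cardsU1 cards2 !inE.
by rewrite eq_sym (negbTE ac) eq_sym (negbTE bc) ab.
Qed.

Lemma vertex_outside_pair (T : finType) (a b : T) :
  3 <= #|T| -> exists c, c \notin [set a; b].
Proof.
move=> T3; have /set0Pn [c] : ~: [set a; b] != set0.
  rewrite -card_gt0; move: T3; rewrite -(cardsC [set a; b]) cards2.
  by case: (a != b); case: #|~: _|.
by rewrite in_setC; exists c.
Qed.

Lemma imset_pair (T T' : finType) (f : T -> T') (a b : T) :
  f @: [set a; b] = [set f a; f b].
Proof. by rewrite imsetU1 imset_set1. Qed.

Section Families.
Variable T : finType.
Variable e : rel T.

Lemma has_disjoint_S_trees0 (S : {set T}) : has_disjoint_S_trees e S 0.
Proof. by exists (fun _ => (set0, set0)); split; case. Qed.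

Lemma has_disjoint_S_trees_le (S : {set T}) k m :
  has_disjoint_S_trees e S k -> m <= k -> has_disjoint_S_trees e S m.
Proof.
move=> [Tr [trees disj]] le_mk; exists (fun i => Tr (widen_ord le_mk i)).
split=> // i j ij; apply: disj; apply: contra ij => /eqP/(congr1 val) ij.
by apply/eqP/val_inj.
Qed.

Lemma has_disjoint_S_trees_family (S : {set T}) (I : finType)
    (Tr : I -> {set T} * {set {set T}}) :
  (forall i, S_tree e S (Tr i).1 (Tr i).2) ->
  (forall i j, i != j -> [disjoint (Tr i).2 & (Tr j).2]) ->
  has_disjoint_S_trees e S #|I|.
Proof.
move=> trees disj; exists (fun i => Tr (enum_val i)); split=> // i j ij.
by apply: disj; apply: contra ij => /eqP/enum_val_inj ->.
Qed.

End Families.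

Section Stars.
Variable T : finType.
Variable e : rel T.

(* A graph in which every edge passes through a fixed vertex c has no cycle:
   the predecessor of every vertex other than c on the cycle is c, so two
   distinct such vertices would both be the successor of c. *)
Lemma hub_acyclic (F : {set {set T}}) c :
  (forall p q, sub_adj F p q -> (p == c) || (q == c)) ->
  ~ exists s : seq T, [/\ uniq s, 3 <= size s & cycle (sub_adj F) s].
Proof.
move=> hub [s [uniq_s size_s cycle_s]].
have prev_hub p : p \in s -> p != c -> prev s p = c.
  move=> ps pc; have := hub _ _ (prev_cycle cycle_s ps).
  by rewrite (negbTE pc) orbF => /eqP.
have: 1 < #|[predD1 s & c]|.
  move: size_s; rewrite -(card_uniqP uniq_s) (cardD1 c (mem s)).
  by case: (_ \in _) => /= h; [exact: h | exact: ltnW h].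
case/card_gt1P => p [q]; rewrite !inE => -[/andP[pc ps] /andP[qc qs] pq].
by rewrite -(next_prev uniq_s p) -(next_prev uniq_s q) !prev_hub ?eqxx in pq.
Qed.

Definition star (c : T) (S : {set T}) : {set {set T}} := [set [set c; t] | t in S].

Lemma star_adj_hub c S p q : sub_adj (star c S) p q -> (p == c) || (q == c).
Proof.
case/imsetP => t _ Epq; have: c \in [set p; q] by rewrite Epq set21.
by rewrite !inE eq_sym (eq_sym c q).
Qed.

Lemma star_tree c (S : {set T}) :
  (forall t, t \in S -> e c t) -> S_tree e S (c |: S) (star c S).
Proof.
move=> adj_c; split; first exact: subsetUr.
have hub_conn v : v \in c |: S ->
    connect (sub_adj (star c S)) v c /\ connect (sub_adj (star c S)) c v.
  case/setU1P => [->|vS]; first by rewrite connect0.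
  have cv : sub_adj (star c S) c v by apply: imset_f.
  by split; apply: connect1; rewrite // /sub_adj setUC.
split; [split|split].
- by move=> _ /imsetP[t tS ->]; exists c, t; split=> //; apply: adj_c.
- move=> _ /imsetP[t tS ->]; apply/subsetP => v /set2P[]->.
    by rewrite setU11.
  by rewrite setU1r.
- by move=> a b /hub_conn[ac _] /hub_conn[_ cb]; apply: connect_trans ac cb.
- exact: hub_acyclic (@star_adj_hub c S).
Qed.

Lemma star_disjoint c c' (S S' : {set T}) :
  c != c' -> c \notin S' -> [disjoint star c S & star c' S'].
Proof.
move=> cc' cS'; apply: disjoint_no_common => _ /imsetP[t tS ->] /imsetP[t' t'S' E].
have: c \in [set c'; t'] by rewrite -E set21.
by rewrite !inE (negbTE cc') => /eqP ct'; rewrite ct' t'S' in cS'.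
Qed.

Lemma disjoint_star (F : {set {set T}}) c S :
  (forall A, A \in F -> c \notin A) -> [disjoint F & star c S].
Proof.
move=> avoid; apply: disjoint_no_common => A /avoid cA /imsetP[t _ EA].
by rewrite EA set21 in cA.
Qed.

End Stars.

Section SimpleGraphs.
Variable T : finType.
Variable e : rel T.
Hypothesis simple_e : simple_graph e.

Lemma edge_pair_adj a b : is_edge e [set a; b] -> e a b.
Proof.
case: simple_e => sym irr [a' [b' [eab' Eab]]].
have /set2P[] : a' \in [set a; b] by rewrite Eab set21.
all: have /set2P[] : b' \in [set a; b] by rewrite Eab set22.
all: by move=> Eb Ea; rewrite Ea Eb ?irr // sym in eab'.
Qed.

(* A vertex a of S has a tree edge to some neighbour, provided S has another
   vertex s: take the first step of a tree path from a to s. *)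
Lemma S_tree_neighbour (S W : {set T}) F a s :
  S_tree e S W F -> a \in S -> s \in S -> a != s ->
  exists2 b, [set a; b] \in F & e a b.
Proof.
move=> [/subsetP sub_SW [[edges _] [conn _]]] aS sS as_.
case/connectP: (conn a s (sub_SW a aS) (sub_SW s sS)) => -[|b p] /=.
  by move=> _ Esa; rewrite -Esa eqxx in as_.
by move=> /andP[adj_ab _] _; exists b => //; apply/edge_pair_adj/edges.
Qed.

Lemma disjoint_S_trees_neighbours (S : {set T}) k a s :
  has_disjoint_S_trees e S k -> a \in S -> s \in S -> a != s ->
  exists f : 'I_k -> T, injective f /\ forall i, e a (f i).
Proof.
move=> [Tr [trees disj]] aS sS as_.
have nbr i : exists b, ([set a; b] \in (Tr i).2) && e a b.
  by have [b ? ?] := S_tree_neighbour (trees i) aS sS as_; exists b; apply/andP.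
pose f i := xchoose (nbr i).
have /all_and2 [f_edge f_adj] i : [set a; f i] \in (Tr i).2 /\ e a (f i).
  exact/andP/(xchooseP (nbr i)).
exists f; split=> // i j fij; apply/eqP; apply: contraT => ij.
by have := disjointFr (disj i j ij) (f_edge i); rewrite fij f_edge.
Qed.

Lemma disjoint_S_trees_bound (S : {set T}) k :
  1 < #|S| -> has_disjoint_S_trees e S k -> k <= #|T|.
Proof.
move=> /card_gt1P [a [s [aS sS as_]]] trees.
have [f [f_inj _]] := disjoint_S_trees_neighbours trees aS sS as_.
by rewrite -(card_ord k) -(card_imset predT f_inj) max_card.
Qed.

Lemma lambda_exists (S : {set T}) : 1 < #|S| -> exists l, is_lambda e S l.
Proof.
move=> S2; have bound k := @disjoint_S_trees_bound S k S2.
by have [l lambda_l] := bounded_max (@has_disjoint_S_trees0 _ e S) bound; exists l.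
Qed.

Lemma lambda3_S_trees l (S : {set T}) :
  is_lambda3 e l -> #|S| = 3 -> has_disjoint_S_trees e S l.
Proof.
move=> [_ lambda3_min] S3.
have [m lambda_m] : exists m, is_lambda e S m by apply: lambda_exists; rewrite S3.
exact: has_disjoint_S_trees_le lambda_m.1 (lambda3_min S m S3 lambda_m).
Qed.

Lemma lambda3_neighbours l a :
  3 <= #|T| -> is_lambda3 e l ->
  exists f : 'I_l -> T, injective f /\ forall i, e a (f i).
Proof.
move=> T3 lambda3.
have [b] := vertex_outside_pair a a T3; rewrite !inE orbb => ba.
have [c] := vertex_outside_pair a b T3; rewrite !inE negb_or => /andP[ca cb].
have S3 : #|[set a; b; c]| = 3 by rewrite card3 // eq_sym.
apply: (disjoint_S_trees_neighbours (s := b) (lambda3_S_trees lambda3 S3)).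
- by rewrite !inE eqxx.
- by rewrite !inE eqxx orbT.
- by rewrite eq_sym.
Qed.

End SimpleGraphs.

Definition map_edges (T T' : finType) (f : T -> T') (F : {set {set T}}) :
  {set {set T'}} := [set f @: (A : {set T}) | A in F].

Lemma map_edges_disjoint (T T' : finType) (f : T -> T') (F F' : {set {set T}}) :
  injective f -> [disjoint F & F'] -> [disjoint map_edges f F & map_edges f F'].
Proof. by move=> f_inj; rewrite imset_disjoint //; apply: imset_inj. Qed.

Section MapTrees.
Variables (T T' : finType) (e : rel T) (e' : rel T') (f : T -> T') (g : T' -> T).
Hypothesis fK : cancel f g.
Hypothesis f_hom : forall a b, e a b -> e' (f a) (f b).

Lemma map_edges_adj F p q :
  sub_adj (map_edges f F) p q ->
  [/\ p = f (g p), q = f (g q) & sub_adj F (g p) (g q)].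
Proof.
case/imsetP => A AF E.
have /imsetP [a _ Ep] : p \in f @: A by rewrite -E set21.
have /imsetP [b _ Eq] : q \in f @: A by rewrite -E set22.
rewrite Ep Eq !fK; split=> //; rewrite /sub_adj; suff -> : [set a; b] = A by [].
by apply: (imset_inj (can_inj fK)); rewrite imset_pair -Ep -Eq.
Qed.

Lemma map_S_tree S W F :
  S_tree e S W F -> S_tree e' (f @: S) (f @: W) (map_edges f F).
Proof.
move=> [sub_SW [[edges sub_FW] [conn acyclic]]].
split; first exact: imsetS.
split; [split|split].
- move=> _ /imsetP [A AF ->]; have [a [b [ab ->]]] := edges A AF.
  by exists (f a), (f b); rewrite imset_pair; split=> //; apply: f_hom.
- by move=> _ /imsetP [A AF ->]; apply/imsetS/sub_FW.
- move=> _ _ /imsetP [a aW ->] /imsetP [b bW ->].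
  case/connectP: (conn a b aW bW) => p path_p last_p.
  apply/connectP; exists (map f p); last by rewrite last_map last_p.
  rewrite path_map; apply: sub_path path_p => v w vw.
  by rewrite /= /sub_adj -imset_pair; apply: imset_f.
- move=> [s [uniq_s size_s cycle_s]]; apply: acyclic; exists (map g s).
  have in_image p : p \in s -> p = f (g p).
    by move=> ps; have [] := map_edges_adj (next_cycle cycle_s ps).
  split; last 1 first.
  + by rewrite cycle_map; apply: sub_cycle cycle_s => p q /map_edges_adj[].
  + rewrite map_inj_in_uniq // => p q ps qs E.
    by rewrite (in_image p ps) (in_image q qs) E.
  + by rewrite size_map.
Qed.

End MapTrees.

Section LexProduct.
Variables (V1 V2 : finType) (eG : rel V1) (eH : rel V2).

Lemma lexprod_in_layer u a b : eH a b -> lexprod eG eH (u, a) (u, b).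
Proof. by move=> ab; rewrite /lexprod /= eqxx ab orbT. Qed.

Lemma lexprod_across w v (p : V1 * V2) : eG w p.1 -> lexprod eG eH (w, v) p.
Proof. by move=> wp; rewrite /lexprod /= wp. Qed.

Variables (u : V1) (S2 : {set V2}).

Lemma layer_S_tree W F :
  S_tree eH S2 W F ->
  S_tree (lexprod eG eH) (pair u @: S2) (pair u @: W) (map_edges (pair u) F).
Proof. by apply: (map_S_tree (g := snd)) => // a b; apply: lexprod_in_layer. Qed.

Lemma cross_star_tree w v :
  eG w u -> S_tree (lexprod eG eH) (pair u @: S2)
              ((w, v) |: pair u @: S2) (star (w, v) (pair u @: S2)).
Proof. by move=> wu; apply: star_tree => _ /imsetP[b _ ->]; apply: lexprod_across. Qed.

Lemma off_layer w v (B : {set V2}) : w != u -> (w, v) \notin pair u @: B.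
Proof. by move=> wu; apply/imsetP => -[b _ [E _]]; rewrite E eqxx in wu. Qed.

Lemma layer_star_disjoint w v (F : {set {set V2}}) :
  w != u -> [disjoint map_edges (pair u) F & star (w, v) (pair u @: S2)].
Proof. by move=> wu; apply: disjoint_star => _ /imsetP[B _ ->]; apply: off_layer. Qed.

Lemma cross_stars_disjoint w v c :
  w != u -> (w, v) != c ->
  [disjoint star (w, v) (pair u @: S2) & star c (pair u @: S2)].
Proof. by move=> wu wv_c; apply: star_disjoint (off_layer _ _ wu). Qed.

Lemma lexprod_layer_trees l1 l2 (g : 'I_l1 -> V1) :
  simple_graph eG -> has_disjoint_S_trees eH S2 l2 ->
  injective g -> (forall j, eG u (g j)) ->
  has_disjoint_S_trees (lexprod eG eH) (pair u @: S2) (l2 + l1 * #|V2|).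
Proof.
move=> [symG irrG] [TrH [treesH disjH]] g_inj adj_g.
have g_off j : g j != u by apply: contraTneq (adj_g j) => ->; rewrite irrG.
pose Tr (i : 'I_l2 + 'I_l1 * V2) := match i with
  | inl j => (pair u @: (TrH j).1, map_edges (pair u) (TrH j).2)
  | inr (j, v) => ((g j, v) |: pair u @: S2, star (g j, v) (pair u @: S2)) end.
have -> : l2 + l1 * #|V2| = #|{: 'I_l2 + 'I_l1 * V2}|.
  by rewrite card_sum card_prod !card_ord.
apply: (has_disjoint_S_trees_family (Tr := Tr)).
  case=> [j|[j v]]; first exact: layer_S_tree.
  by apply: cross_star_tree; rewrite symG.
case=> [j|[j v]] [j'|[j' v']] ij /=.
- apply: map_edges_disjoint; first by move=> a b [].
  by apply: disjH; apply: contra ij => /eqP ->.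
- exact: layer_star_disjoint.
- by rewrite disjoint_sym layer_star_disjoint.
- apply: cross_stars_disjoint (g_off j) _.
  by apply: contra ij => /eqP[/g_inj -> ->].
Qed.

End LexProduct.

Theorem lemma3p1 (V1 V2 : finType) (eG : rel V1) (eH : rel V2)
  (l1 l2 : nat) (u : V1) (x y z : V1 * V2) :
  simple_graph eG -> simple_graph eH ->
  connected_graph eG -> connected_graph eH ->
  3 <= #|V1| -> 3 <= #|V2| ->
  is_lambda3 eG l1 -> is_lambda3 eH l2 ->
  x != y -> y != z -> x != z ->
  x.1 = u -> y.1 = u -> z.1 = u ->
  has_disjoint_S_trees (lexprod eG eH) [set x; y; z] (l2 + l1 * #|V2|).
Proof.
move=> sG sH _ _ V1_3 _ lambdaG lambdaH xy yz xz x1 y1 z1.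
have in_layer (p : V1 * V2) : p.1 = u -> p = (u, p.2) by case: p => ? ? /= ->.
have S_layer : [set x; y; z] = pair u @: [set x.2; y.2; z.2].
  by rewrite !imsetU !imset_set1 -(in_layer x x1) -(in_layer y y1) -(in_layer z z1).
have layer3 : #|[set x.2; y.2; z.2]| = 3.
  have pair_inj : injective (pair u : V2 -> V1 * V2) by move=> a b [].
  by rewrite -(card_imset _ pair_inj) -S_layer card3.
have [g [g_inj adj_g]] := lambda3_neighbours sG u V1_3 lambdaG.
rewrite S_layer.
exact: lexprod_layer_trees sG (lambda3_S_trees sH lambdaH layer3) g_inj adj_g.
Qed.
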